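(* Fix an integer $k\ge1$, let $\Delta_k:=\log(1/2)/\log(1-2^{-k})$ and fix $\Delta>\Delta_k$. For $n\ge k$ let $m=\lceil\Delta n^k\rceil$ and consider the test $\psi_{\mathcal{L}}(V)=\mathbf{1}\{(\mathcal{L}_V)\text{ has a solution in }\mathbb{F}_2^{N_k}\}$. Under $H_0$ the data $(\ell_j,\varepsilon_j)_{j\in[m]}$ are i.i.d. with $\ell_j$ a uniformly random $k$-tuple of linearly independent linear forms and $\varepsilon_j\in\mathbb{F}_2^k$ uniform and independent of $\ell_j$; under $H_1$ the flats $V_j=\{x:\ell_{j,i}(x)=\varepsilon_{j,i}\ \forall i\}$ have joint law $\mathbf{P}_{\text{planted}}$, each given by any pair $(\ell_j,\varepsilon_j)$ describing it. Then as $n\to\infty$, $$\mathbf{P}_{\text{unif}}(\psi_{\mathcal{L}}=1)\vee\mathbf{P}_{\text{planted}}(\psi_{\mathcal{L}}=0)\to0.$$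
   Context: A $k$-flat of $\mathbb{F}_2^n$ is an affine subspace of dimension $n-k$, described as $\{x:\ell_i(x)=\varepsilon_i\ \forall i\in[k]\}$ with $\ell_1,\dots,\ell_k$ linearly independent linear forms and $\varepsilon\in\mathbb{F}_2^k$. $q_0$ is the uniform distribution on $k$-flats, $q_x$ the uniform distribution on $k$-flats not containing $x$; $\mathbf{P}_{\text{unif}}=q_0^{\otimes m}$, $\mathbf{P}_{\text{planted}}=2^{-n}\sum_{x\in\mathbb{F}_2^n}q_x^{\otimes m}$. Let $N_k=\sum_{i=0}^k\binom{n}{i}$ and index coordinates of $\mathbb{F}_2^{N_k}$ by $S\subseteq[n]$, $|S|\le k$. For linear forms $\ell=(\ell_1,\dots,\ell_k)$ and $\alpha\in\mathbb{F}_2^k$, expand $\prod_{i=1}^k(\ell_i(x)+\alpha_i)$ in $\mathbb{F}_2[x_1,\dots,x_n]$ and reduce with $x_s^2=x_s$ to $\sum_{|S|\le k}c_S(\ell,\alpha)\prod_{s\in S}x_s$; set $\mathcal{L}_{\ell,\alpha}(Y)=\sum_{|S|\le k}c_S(\ell,\alpha)Y_S$. With $\alpha_j=(1-\varepsilon_{j,i})_i$, the system $(\mathcal{L}_V)$ is: $\mathcal{L}_{\ell_j,\alpha_j}(Y)=0$ for all $j\in[m]$, and $Y_\emptyset=1$. $a\vee b=\max(a,b)$. *)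

From Stdlib Require Import Reals.
From HB Require Import structures.
From mathcomp Require Import all_boot all_order all_algebra all_field.
Set Implicit Arguments. Unset Strict Implicit. Unset Printing Implicit Defensive.

(* A k-tuple of linear forms on F_2^n is a k x n matrix over 'F_2 (row i is
   ell_i, with ell_i(x) = sum_s l i s * x s); linear independence = row_free. *)
Definition datum (n k : nat) := ('M['F_2]_(k, n) * 'rV['F_2]_k)%type.

Definition in_flat n k (d : datum n k) (x : 'rV['F_2]_n) : bool :=
  (x *m d.1^T == d.2)%R.

Definition alpha k (e : 'rV['F_2]_k) : 'rV['F_2]_k := \row_i (1 - e ord0 i)%R.

(* Coordinates of F_2^{N_k}: subsets S of [n] with |S| <= k. *)
Definition Idx (n k : nat) := {S : {set 'I_n} | #|S| <= k}.

(* c_S(ell, a): coefficient of the multilinear monomial prod_{s in S} x_s in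
   the expansion of prod_i (sum_s l i s * x_s + a_i), reduced with x_s^2 = x_s.
   Expanding the product = choosing, for each factor i, either the constant a_i
   (None) or the term l i s * x_s (Some s); after reduction the monomial is
   indexed by the set of chosen variables. *)
Definition coefS n k (l : 'M['F_2]_(k, n)) (a : 'rV['F_2]_k) (S : {set 'I_n})
  : 'F_2 :=
  (\sum_(f : {ffun 'I_k -> option 'I_n} | [set s | Some s \in codom f] == S)
     \prod_(i < k) match f i with None => a ord0 i | Some s => l i s end)%R.

Definition Lform n k (l : 'M['F_2]_(k, n)) (a : 'rV['F_2]_k)
  (Y : {ffun Idx n k -> 'F_2}) : 'F_2 :=
  (\sum_(S : Idx n k) coefS l a (val S) * Y S)%R.

Definition psiL n k m (d : {ffun 'I_m -> datum n k}) : bool :=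
  [exists Y : {ffun Idx n k -> 'F_2},
     [forall S : Idx n k, (val S == set0) ==> (Y S == 1%R)] &&
     [forall j : 'I_m, Lform (d j).1 (alpha (d j).2) Y == 0%R]].

(* Support of P_unif (uniform on it): m i.i.d. uniform pairs (ell_j, eps_j),
   ell_j linearly independent, eps_j uniform and independent. *)
Definition Omega0 n k m : {set {ffun 'I_m -> datum n k}} :=
  [set d : {ffun 'I_m -> datum n k} | [forall j, row_free (d j).1]].

(* Support of q_x^{(x) m} in terms of representing pairs: uniform over pairs
   whose flat does not contain x (each flat has the same number of
   representations, so this is q_x on flats). *)
Definition OmegaX n k m (x : 'rV['F_2]_n) : {set {ffun 'I_m -> datum n k}} :=
  [set d : {ffun 'I_m -> datum n k} | [forall j, row_free (d j).1 && ~~ in_flat (d j) x]].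

Arguments OmegaX : clear implicits.

Definition P_unif_accept n k m : R :=
  Rdiv (INR #|[set d in Omega0 n k m | psiL d]|) (INR #|Omega0 n k m|).

Definition P_planted_reject n k m : R :=
  Rmult (Rinv (pow (IZR (Zpos 2)) n)) (\big[Rplus/R0]_(x : 'rV['F_2]_n)
      Rdiv (INR #|[set d in OmegaX n k m x | ~~ psiL d]|) (INR #|OmegaX n k m x|)).

Definition Delta_k (k : nat) : R := Rdiv (ln (Rinv (IZR (Zpos 2)))) (ln (Rminus R1 (Rinv (pow (IZR (Zpos 2)) k)))).

Definition ceilR (x : R) : Z := Z.opp (Int_part (Ropp x)).

Definition m_of (Delta : R) (k n : nat) : nat :=
  Z.to_nat (ceilR (Rmult Delta (INR (n ^ k)%N))).

(* Planted side: every flat avoids the hidden point x, and the vector of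
   multilinear monomials Y_S = prod_{s in S} x_s solves (L_V), since
   L_{ell,alpha}(Y) is the evaluation at x of prod_i (ell_i(x) + 1 - eps_i).
   Null side: for fixed Y with Y_emptyset = 1 the sum of L_{ell,alpha}(Y) over
   all alpha is 1 (only the constant monomial survives), so for each ell some
   eps gives an equation violated by Y.  Hence Y solves m independent uniform
   equations with probability at most (1 - 2^-k)^m, and a union bound over the
   at most 2^((n+1)^k) candidates Y gives
   P_unif(psi = 1) <= 2^((n+1)^k) (1 - 2^-k)^m = exp(-Omega(n^k)) as soon as
   m >= Delta n^k with Delta > Delta_k. *)

From Stdlib Require Import Reals Lra Lia ZArith.
From HB Require Import structures.
From mathcomp Require Import all_boot all_order all_algebra all_field zify.
Set Implicit Arguments. Unset Strict Implicit. Unset Printing Implicit Defensive.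

Import GRing.Theory.

Section F2.
Local Open Scope ring_scope.

Lemma F2_cases (a : 'F_2) : a = 0 \/ a = 1.
Proof. by case: a => [[|[|//]] a_lt2]; [left | right]; apply: val_inj. Qed.

Lemma sum_F2 (F : 'F_2 -> 'F_2) : \sum_b F b = F 0 + F 1.
Proof.
rewrite (@big_ord_recl _ _ _ 1 F) (@big_ord_recl _ _ _ 0) big_ord0 addr0.
by congr (F _ + F _); apply: val_inj.
Qed.

Lemma addrr_F2 (a : 'F_2) : a + a = 0.
Proof. by rewrite addrr_pchar2 // pchar_Fp. Qed.

Lemma F2_eq_of_eq0 (a b : 'F_2) : (a == 0) = (b == 0) -> a = b.
Proof. by case: (F2_cases a) => ->; case: (F2_cases b) => -> //; rewrite eqxx oner_eq0. Qed.

End F2.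

Lemma card_ffun_forall (aT T : finType) (p : pred T) :
  #|[set d : {ffun aT -> T} | [forall j, p (d j)]]| = (#|p| ^ #|aT|)%N.
Proof. by rewrite -card_ffun_on; apply: eq_card => d; rewrite inE; apply/forallP/ffun_onP. Qed.

Lemma union_bound (T I : finType) (A : {pred T}) (P : I -> {pred T}) :
  (forall t, t \in A -> exists i, t \in P i) -> (#|A| <= \sum_i #|P i|)%N.
Proof.
move=> A_covered; rewrite -sum1_card.
apply: (@leq_trans (\sum_t \sum_i (t \in P i : nat))).
  rewrite [X in (_ <= X)%N](bigID (mem A)) /=; apply: leq_trans (leq_addr _ _).
  apply: leq_sum => t /A_covered [i t_Pi].
  by rewrite (bigD1 i) //= t_Pi.
rewrite exchange_big; apply: leq_sum => i _.
rewrite -[X in (_ <= X)%N]sum1_card [X in (_ <= X)%N]big_mkcond.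
by apply: leq_sum => t _; case: (t \in P i).
Qed.

Section Expansion.
Local Open Scope ring_scope.
Variables n k : nat.

Definition vars_of (f : {ffun 'I_k -> option 'I_n}) : {set 'I_n} :=
  [set s | Some s \in codom f].

Lemma card_vars_of_le f : (#|vars_of f| <= k)%N.
Proof.
rewrite -(card_imset _ (@Some_inj _)) -[k in (_ <= k)%N]card_ord.
apply: leq_trans (leq_imset_card f _); apply: subset_leq_card.
by apply/subsetP => o /imsetP [s]; rewrite inE => /codomP [i ->] ->; apply: imset_f.
Qed.

Definition vars_idx f : Idx n k := exist _ (vars_of f) (card_vars_of_le f).

Lemma vars_of_none : vars_of [ffun _ => None] = set0.
Proof. by apply/setP => s; rewrite !inE; apply/codomP => -[i]; rewrite ffunE. Qed.

Lemma alphaK : involutive (@alpha k).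
Proof.
by move=> e; apply/rowP => i; rewrite !mxE; case: (F2_cases (e ord0 i)) => ->; apply: val_inj.
Qed.

Definition factor (l : 'M['F_2]_(k, n)) (a : 'rV['F_2]_k) (i : 'I_k) (o : option 'I_n)
  : 'F_2 :=
  if o is Some s then l i s else a ord0 i.

(* After distributing, the sum factors over [i]; a factor that picks a
   variable is constant in [a_i], so its sum over [a_i : 'F_2] vanishes. *)
Lemma sum_expansion_term (l : 'M['F_2]_(k, n)) (f : {ffun 'I_k -> option 'I_n}) :
  \sum_(a : 'rV['F_2]_k) \prod_(i < k) factor l a i (f i)
  = (f == [ffun _ => None])%:R.
Proof.
rewrite (reindex (fun g : {ffun 'I_k -> 'F_2} => \row_i g i)); last first.
  exists (fun a : 'rV['F_2]_k => [ffun i => a ord0 i]) => g _.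
    by apply/ffunP => i; rewrite ffunE mxE.
  by apply/rowP => i; rewrite mxE ffunE.
under eq_bigr do under eq_bigr do rewrite /factor mxE.
rewrite -(bigA_distr_bigA (fun i (b : 'F_2) => if f i is Some s then l i s else b)).
have [->|] := eqVneq f [ffun _ => None].
  by rewrite big1 // => i _; rewrite ffunE sum_F2 add0r.
move=> f_neq; have [i] : exists i, f i != None.
  apply/existsP; apply: contraR f_neq => /existsPn f_none.
  by apply/eqP/ffunP => i; rewrite ffunE; apply/eqP/negPn.
rewrite (bigD1 i) //= sum_F2; case: (f i) => // s _.
by rewrite addrr_F2 mul0r.
Qed.

Lemma coefSE l a S :
  coefS l a S = \sum_(f | vars_of f == S) \prod_(i < k) factor l a i (f i).
Proof. by []. Qed.

Lemma sum_coefS (l : 'M['F_2]_(k, n)) (S : {set 'I_n}) :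
  \sum_(a : 'rV['F_2]_k) coefS l a S = (S == set0)%:R.
Proof.
under eq_bigr do rewrite coefSE.
rewrite exchange_big /=; under eq_bigr do rewrite sum_expansion_term.
rewrite big_mkcond (bigD1 [ffun _ => None]) //= big1 => [|f /negbTE->]; last first.
  by case: ifP.
by rewrite vars_of_none eqxx addr0 eq_sym; case: (S == set0).
Qed.

Lemma sum_Lform (l : 'M['F_2]_(k, n)) (Y : {ffun Idx n k -> 'F_2}) :
  (forall S : Idx n k, val S = set0 -> Y S = 1) ->
  \sum_(a : 'rV['F_2]_k) Lform l a Y = 1.
Proof.
move=> Y_empty; rewrite exchange_big /=.
under eq_bigr do rewrite -mulr_suml sum_coefS.
have card_set0_le : (#|@set0 'I_n| <= k)%N by rewrite cards0.
pose S0 : Idx n k := exist _ set0 card_set0_le.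
rewrite (bigD1 S0) //= big1 => [|S S_neq]; first by rewrite eqxx mul1r addr0 Y_empty.
by case: eqP => [S_empty|]; [case/eqP: S_neq; apply: val_inj | rewrite mul0r].
Qed.

Lemma exists_Lform_alpha_neq0 (l : 'M['F_2]_(k, n)) (Y : {ffun Idx n k -> 'F_2}) :
  (forall S : Idx n k, val S = set0 -> Y S = 1) ->
  exists e, Lform l (alpha e) Y != 0.
Proof.
move=> Y_empty; apply/existsP; apply: contraT => /existsPn Lform_eq0.
have := sum_Lform l Y_empty; rewrite big1 => [/eqP|a _]; first by rewrite eq_sym oner_eq0.
by rewrite -(alphaK a); apply/eqP/negPn.
Qed.

End Expansion.

Section Planted.
Local Open Scope ring_scope.
Variables n k : nat.

Definition monomials (x : 'rV['F_2]_n) : {ffun Idx n k -> 'F_2} :=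
  [ffun S : Idx n k => \prod_(s in val S) x ord0 s].

Lemma sum_option (F : option 'I_n -> 'F_2) : \sum_o F o = F None + \sum_s F (Some s).
Proof.
rewrite (bigD1 None) //= (reindex_omap Some id) /=; last by case.
by congr (_ + _); apply: eq_bigl => s; rewrite eqxx.
Qed.

(* Multilinear reduction: over F_2, [x_s ^+ 2 = x_s], so a monomial only
   depends on the set of variables it contains. *)
Lemma prod_vars_of (x : 'rV['F_2]_n) (f : {ffun 'I_k -> option 'I_n}) :
  \prod_(s in vars_of f) x ord0 s =
  \prod_(i < k) (if f i is Some s then x ord0 s else 1).
Proof.
apply: F2_eq_of_eq0; apply/idP/idP => /prodf_eq0 [].
  move=> s; rewrite inE => /codomP [i f_i] x_s.
  by apply/prodf_eq0; exists i => //; rewrite -f_i.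
move=> i _; case f_i: (f i) => [s|] /=; last by rewrite oner_eq0.
by move=> x_s; apply/prodf_eq0; exists s => //; rewrite inE; apply/codomP; exists i.
Qed.

Lemma Lform_monomials (l : 'M['F_2]_(k, n)) (a : 'rV['F_2]_k) (x : 'rV['F_2]_n) :
  Lform l a (monomials x) = \prod_(i < k) (a ord0 i + \sum_s l i s * x ord0 s).
Proof.
rewrite /Lform; under eq_bigr do rewrite coefSE mulr_suml big_mkcond /=.
rewrite exchange_big /=.
transitivity (\sum_(f : {ffun 'I_k -> option 'I_n})
   \prod_(i < k) (factor l a i (f i) * if f i is Some s then x ord0 s else 1)).
  apply: eq_bigr => f _; rewrite big_split /= -prod_vars_of.
  rewrite (bigD1 (vars_idx f)) //= [X in _ + X]big1 => [|S S_neq].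
    by rewrite eqxx ffunE addr0.
  by case: eqP => // vars_f; case/eqP: S_neq; apply: val_inj; rewrite /= -vars_f.
rewrite -(bigA_distr_bigA (fun i o => factor l a i o * if o is Some s then x ord0 s else 1)).
by apply: eq_bigr => i _; rewrite sum_option mulr1.
Qed.

(* [monomials x] solves the equation of every flat avoiding [x]: some factor
   [1 - eps_i + ell_i(x)] of the product vanishes. *)
Lemma Lform_alpha_monomials (d : datum n k) (x : 'rV['F_2]_n) :
  ~~ in_flat d x -> Lform d.1 (alpha d.2) (monomials x) = 0.
Proof.
move=> x_notin; rewrite Lform_monomials.
have [i] : exists i, (x *m d.1^T) ord0 i != d.2 ord0 i.
  apply/existsP; apply: contraR x_notin => /existsPn eq_d.
  by apply/eqP/rowP => i; apply/eqP/negPn.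
rewrite (bigD1 i) //= => neq_i; apply/eqP; rewrite mulf_eq0; apply/orP; left.
have -> : \sum_s d.1 i s * x ord0 s = (x *m d.1^T) ord0 i.
  by rewrite mxE; apply: eq_bigr => s _; rewrite mxE mulrC.
rewrite mxE; move: neq_i.
by case: (F2_cases ((x *m d.1^T) ord0 i)) => ->; case: (F2_cases (d.2 ord0 i)) => -> //= _;
  apply/eqP/val_inj.
Qed.

Lemma psiL_OmegaX m (x : 'rV['F_2]_n) (d : {ffun 'I_m -> datum n k}) :
  d \in OmegaX n k m x -> psiL d.
Proof.
rewrite inE => /forallP d_avoid; apply/existsP; exists (monomials x); apply/andP; split.
  by apply/forallP => S; apply/implyP => /eqP S_empty; rewrite ffunE S_empty big_set0.
apply/forallP => j; apply/eqP/Lform_alpha_monomials.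
by case/andP: (d_avoid j).
Qed.

End Planted.

Lemma P_planted_reject_eq0 n k m : P_planted_reject n k m = R0.
Proof.
have reject_empty x : #|[set d in OmegaX n k m x | ~~ psiL d]| = 0%N.
  apply/eqP; rewrite cards_eq0; apply/eqP/setP => d; rewrite in_set0 inE.
  by apply/negbTE/negP => /andP [/psiL_OmegaX ->].
rewrite /P_planted_reject (eq_bigr (fun _ => R0)) => [|x _]; last first.
  by rewrite reject_empty /Rdiv Rmult_0_l.
have -> : \big[Rplus/R0]_(x : 'rV['F_2]_n) R0 = R0.
  by elim/big_ind: _ => // a b -> ->; rewrite Rplus_0_r.
by rewrite Rmult_0_r.
Qed.

Section Counting.
Local Open Scope ring_scope.
Variables n k : nat.

Definition row_free_mx : {set 'M['F_2]_(k, n)} := [set l | row_free l].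

Definition solves (Y : {ffun Idx n k -> 'F_2}) (t : datum n k) : bool :=
  row_free t.1 && (Lform t.1 (alpha t.2) Y == 0).

Lemma card_row_free_datum :
  #|[pred t : datum n k | row_free t.1]| = (#|row_free_mx| * 2 ^ k)%N.
Proof.
have -> : #|[pred t : datum n k | row_free t.1]| = #|setX row_free_mx [set: 'rV['F_2]_k]|.
  by apply: eq_card => -[l e]; rewrite !inE andbT.
by rewrite cardsX cardsT card_mx card_Fp // mul1n.
Qed.

Lemma card_Omega0 m : #|Omega0 n k m| = ((#|row_free_mx| * 2 ^ k) ^ m)%N.
Proof. by rewrite -card_row_free_datum -[m in RHS]card_ord -card_ffun_forall. Qed.

(* Each [ell] has at most [2^k - 1] right-hand sides [eps] solved by [Y],
   because some [eps] is not. *)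
Lemma card_solves_le (Y : {ffun Idx n k -> 'F_2}) :
  (forall S : Idx n k, val S = set0 -> Y S = 1) ->
  (#|solves Y| <= #|row_free_mx| * (2 ^ k - 1))%N.
Proof.
move=> Y_empty.
have -> : #|solves Y| =
    (\sum_l \sum_e (if row_free l && (Lform l (alpha e) Y == 0%R) then 1 else 0))%N.
  by rewrite -sum1_card big_mkcond pair_bigA.
rewrite -sum_nat_const [X in (_ <= X)%N]big_mkcond; apply: leq_sum => l _.
rewrite inE; case: (row_free l) => /=; last by rewrite big1.
rewrite -big_mkcond sum1_card -ltnS subn1 prednK ?expn_gt0 //.
have : [set e | Lform l (alpha e) Y == 0] \proper [set: 'rV['F_2]_k].
  rewrite properT; apply/eqP => all_e; have [e0] := exists_Lform_alpha_neq0 l Y_empty.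
  by have := in_setT e0; rewrite -all_e inE => /eqP ->; rewrite eqxx.
by move/proper_card; rewrite cardsT card_mx card_Fp // mul1n cardsE.
Qed.

Lemma card_accepted_le m :
  (#|[set d in Omega0 n k m | psiL d]|
     <= 2 ^ #|{: Idx n k}| * (#|row_free_mx| * (2 ^ k - 1)) ^ m)%N.
Proof.
pose good (Y : {ffun Idx n k -> 'F_2}) :=
  [forall S : Idx n k, (val S == set0) ==> (Y S == 1)].
pose solved_by Y : {set {ffun 'I_m -> datum n k}} :=
  if good Y then [set d : {ffun 'I_m -> datum n k} | [forall j, solves Y (d j)]] else set0.
apply: leq_trans (union_bound (P := solved_by) _) _.
  move=> d; rewrite !inE => /andP [/forallP d_free /existsP [Y /andP [Y_good /forallP Y_sol]]].
  exists Y; rewrite /solved_by ifT // inE.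
  by apply/forallP => j; rewrite /solves d_free Y_sol.
have -> : (2 ^ #|{: Idx n k}| = #|{: {ffun Idx n k -> 'F_2}}|)%N by rewrite card_ffun card_Fp.
set bound := (_ ^ m)%N; rewrite -sum_nat_const; apply: leq_sum => Y _; rewrite /solved_by.
case Y_good: (good Y); last by rewrite cards0.
have Y_empty (S : Idx n k) : val S = set0 -> Y S = 1.
  by move=> S_empty; apply/eqP; apply: (implyP (forallP Y_good S)); apply/eqP.
rewrite card_ffun_forall card_ord /bound.
have [->|m_gt0] := posnP m; first by rewrite !expn0.
by rewrite leq_exp2r // card_solves_le.
Qed.

End Counting.

Lemma card_Idx_le n k : (#|{: Idx n k}| <= n.+1 ^ k)%N.
Proof.
pose vars_list (S : Idx n k) : {ffun 'I_k -> option 'I_n} :=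
  [ffun i : 'I_k => nth None [seq Some s | s <- enum (val S)] i].
have vars_listK S : vars_of (vars_list S) = val S.
  apply/setP => s; rewrite inE; apply/codomP/idP => [[i]|s_in].
    rewrite ffunE; case: (ltnP i (size [seq Some s | s <- enum (val S)])) => i_lt; last first.
      by rewrite nth_default.
    move=> s_nth; have : Some s \in [seq Some s | s <- enum (val S)] by rewrite s_nth mem_nth.
    by rewrite mem_map ?mem_enum //; move=> ? ? [].
  have s_idx : (index s (enum (val S)) < k)%N.
    by apply: leq_trans (valP S); rewrite cardE index_mem mem_enum.
  exists (Ordinal s_idx); rewrite ffunE /= (nth_map s) ?nth_index ?mem_enum //.
  by rewrite index_mem mem_enum.
have vars_list_inj : injective vars_list.
  by move=> S1 S2 eq_S; apply: val_inj; rewrite -vars_listK eq_S vars_listK.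
by apply: leq_trans (leq_card _ vars_list_inj) _; rewrite card_ffun card_option !card_ord.
Qed.

Section Asymptotics.
Local Open Scope R_scope.

Lemma INR_muln a b : INR (a * b)%N = INR a * INR b.
Proof. exact: mult_INR. Qed.

Lemma INR_expn a b : INR (a ^ b)%N = INR a ^ b.
Proof. by elim: b => [|b IH]; rewrite ?expn0 // expnS INR_muln IH. Qed.

Lemma INR_subn a b : (b <= a)%N -> INR (a - b)%N = INR a - INR b.
Proof. by move/leP; apply: minus_INR. Qed.

Lemma P_unif_accept_ge0 n k m : 0 <= P_unif_accept n k m.
Proof.
rewrite /P_unif_accept /Rdiv; have [->|B_gt0] := posnP #|Omega0 n k m|.
  by rewrite Rinv_0 Rmult_0_r; apply: Rle_refl.
by apply: Rmult_le_pos; [apply: pos_INR | apply/Rlt_le/Rinv_0_lt_compat/lt_0_INR/ltP].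
Qed.

Lemma one_sub_inv_pow2_bounds k : (1 <= k)%N -> 0 < 1 - / 2 ^ k < 1.
Proof.
move=> k_gt0; have two_k_ge2 : 2 <= 2 ^ k.
  by rewrite -(prednK k_gt0) /=; have := pow_R1_Rle 2 k.-1; lra.
have : / 2 ^ k <= / 2 by apply: Rinv_le_contravar; lra.
have : 0 < / 2 ^ k by apply: Rinv_0_lt_compat; lra.
lra.
Qed.

Lemma ratio_le_of_card_bounds (A P I k m : nat) :
  (A <= 2 ^ I * (P * (2 ^ k - 1)) ^ m)%N -> (A <= (P * 2 ^ k) ^ m)%N ->
  INR A / INR ((P * 2 ^ k) ^ m) <= 2 ^ I * (1 - / 2 ^ k) ^ m.
Proof.
move=> A_le_num A_le_den.
have two_k_gt0 : 0 < 2 ^ k by apply: pow_lt; lra.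
have q_ge0 : 0 <= 1 - / 2 ^ k.
  suff : / 2 ^ k <= 1 by lra.
  by rewrite -Rinv_1; apply: Rinv_le_contravar; [lra | apply: pow_R1_Rle; lra].
have [den0|den_gt0] := posnP ((P * 2 ^ k) ^ m)%N.
  have -> : A = 0%N by apply/eqP; rewrite -leqn0 -den0.
  rewrite /Rdiv Rmult_0_l; apply: Rmult_le_pos; [apply: pow_le; lra | exact: pow_le].
have INR2 : INR 2 = 2 by rewrite /=; lra.
have den_eq : INR ((P * 2 ^ k) ^ m) = INR P ^ m * (2 ^ k) ^ m.
  by rewrite INR_expn INR_muln INR_expn INR2 Rpow_mult_distr.
have Pm_neq0 : INR P ^ m <> 0.
  by move=> Pm0; move/ltP/lt_0_INR: den_gt0; rewrite den_eq Pm0 Rmult_0_l; lra.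
have -> : 2 ^ I * (1 - / 2 ^ k) ^ m =
    2 ^ I * (INR P * (2 ^ k - 1)) ^ m / INR ((P * 2 ^ k) ^ m).
  rewrite den_eq Rpow_mult_distr (_ : 1 - / 2 ^ k = (2 ^ k - 1) / 2 ^ k); last by field; lra.
  rewrite Rpow_mult_distr pow_inv; field; split => //; apply: pow_nonzero; lra.
apply: Rmult_le_compat_r; first exact/Rlt_le/Rinv_0_lt_compat/lt_0_INR/ltP.
move/leP/le_INR: A_le_num.
by rewrite INR_muln !INR_expn INR_muln INR_subn ?expn_gt0 // INR_expn INR2.
Qed.

Lemma P_unif_accept_le n k m :
  P_unif_accept n k m <= 2 ^ (n.+1 ^ k)%N * (1 - / 2 ^ k) ^ m.
Proof.
have accepted_sub : (#|[set d in Omega0 n k m | psiL d]| <= #|Omega0 n k m|)%N.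
  by apply/subset_leq_card/subsetP => d; rewrite inE => /andP [].
rewrite /P_unif_accept card_Omega0 in accepted_sub *.
apply: Rle_trans (ratio_le_of_card_bounds (card_accepted_le n k m) accepted_sub) _.
have q_ge0 : 0 <= 1 - / 2 ^ k.
  have [->|k_gt0] := posnP k; first by rewrite /= Rinv_1; lra.
  by have := one_sub_inv_pow2_bounds k_gt0; lra.
apply: Rmult_le_compat_r; first exact: pow_le.
by apply: Rle_pow; [lra | apply/leP/card_Idx_le].
Qed.


Lemma succn_expn_le n j : (1 <= n)%N -> (n.+1 ^ j.+1 <= n ^ j.+1 + 3 ^ j.+1 * n ^ j)%N.
Proof.
move=> n_gt0; elim: j => [|j IH]; first by rewrite !expn1 expn0 muln1; lia.
rewrite [(n.+1 ^ _)%N]expnS; apply: leq_trans (leq_mul (leqnn n.+1) IH) _.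
rewrite [(n ^ j.+2)%N]expnS [(3 ^ j.+2)%N]expnS [(n ^ j.+1)%N]expnS.
have : (1 <= 3 ^ j.+1)%N by rewrite expn_gt0.
move: (3 ^ j.+1)%N (n ^ j.+1)%N => b a; nia.
Qed.

Lemma le_IZR_to_nat z : IZR z <= INR (Z.to_nat z).
Proof.
have [z_ge0|z_lt0] := Z.le_gt_cases 0 z.
  by rewrite INR_IZR_INZ Z2Nat.id //; apply: Rle_refl.
have := pos_INR (Z.to_nat z); have : IZR z < 0 by apply: IZR_lt.
lra.
Qed.

Lemma le_ceilR x : x <= INR (Z.to_nat (ceilR x)).
Proof.
apply: Rle_trans (le_IZR_to_nat _); rewrite /ceilR opp_IZR.
have [floor_le _] := base_Int_part (- x); lra.
Qed.

Lemma ln_one_sub_inv_pow2_lt0 k : (1 <= k)%N -> ln (1 - / 2 ^ k) < 0.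
Proof.
move=> /one_sub_inv_pow2_bounds q_bounds.
by rewrite -ln_1; apply: ln_increasing; lra.
Qed.

Lemma Delta_k_mul_ln k : (1 <= k)%N -> Delta_k k * ln (1 - / 2 ^ k) = - ln 2.
Proof.
move=> /ln_one_sub_inv_pow2_lt0 ln_q_lt0; rewrite /Delta_k ln_Rinv; last lra.
by change (Rminus R1 (/ 2 ^ k)) with (1 - / 2 ^ k); field; lra.
Qed.

Lemma eventually_lt_mul (K c : R) :
  0 < c -> exists N, forall n, (N <= n)%N -> K < c * INR n.
Proof.
move=> c_gt0; exists (Z.to_nat (up (K / c))) => n N_le_n.
have Kc_lt : K / c < INR n.
  have [up_gt _] := archimed (K / c); have := le_IZR_to_nat (up (K / c)).
  have : INR (Z.to_nat (up (K / c))) <= INR n by apply/le_INR/leP.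
  lra.
have -> : K = c * (K / c) by field; lra.
exact: Rmult_lt_compat_l.
Qed.

Lemma Un_cv_exp_tendsto_minus_infty (a : nat -> R) :
  (forall M, 0 < M -> exists N, forall n, (N <= n)%N -> a n <= - M) ->
  Un_cv (fun n => exp (a n)) 0.
Proof.
move=> a_to_minfty eps eps_gt0.
have [N a_le] := a_to_minfty (Rabs (ln eps) + 1) ltac:(have := Rabs_pos (ln eps); lra).
exists N => n N_le_n; rewrite /R_dist Rminus_0_r Rabs_right; last exact/Rle_ge/Rlt_le/exp_pos.
rewrite -(exp_ln eps eps_gt0); apply: exp_increasing.
have := a_le n (introT leP N_le_n); have := Rle_abs (- ln eps); rewrite Rabs_Ropp; lra.
Qed.

Lemma Un_cv_squeeze0 (u v : nat -> R) :
  (forall n, 0 <= u n <= v n) -> Un_cv v 0 -> Un_cv u 0.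
Proof.
move=> u_between v_to0 eps eps_gt0; have [N v_close] := v_to0 eps eps_gt0.
exists N => n N_le_n; have := v_close n N_le_n; have := u_between n.
rewrite /R_dist !Rminus_0_r => -[u_ge0 u_le] v_lt; rewrite Rabs_right; last exact: Rle_ge.
have := Rle_abs (v n); lra.
Qed.

Definition unif_exponent (Delta : R) (k n : nat) : R :=
  INR (n.+1 ^ k)%N * ln 2 + INR (m_of Delta k n) * ln (1 - / 2 ^ k).

Lemma exp_unif_exponent Delta k n : (1 <= k)%N ->
  2 ^ (n.+1 ^ k)%N * (1 - / 2 ^ k) ^ m_of Delta k n = exp (unif_exponent Delta k n).
Proof.
move=> /one_sub_inv_pow2_bounds q_bounds.
by rewrite /unif_exponent exp_plus; congr (_ * _); rewrite -Rpower_pow //; lra.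
Qed.

(* With [m >= Delta n^k] and [(n+1)^k <= n^k + 3^k n^(k-1)], the exponent is
   at most [n^(k-1) (3^k ln 2 - c n)], where [c = -(ln 2 + Delta ln (1 - 2^-k))]
   is positive exactly when [Delta > Delta_k]. *)
Lemma unif_exponent_le j Delta n : (1 <= n)%N ->
  unif_exponent Delta j.+1 n <=
  INR n ^ j * (3 ^ j.+1 * ln 2 + (ln 2 + Delta * ln (1 - / 2 ^ j.+1)) * INR n).
Proof.
move=> n_gt0; rewrite /unif_exponent.
have L_lt0 := ln_one_sub_inv_pow2_lt0 (ltn0Sn j).
have ln2_gt0 : 0 < ln 2 by rewrite -ln_1; apply: ln_increasing; lra.
have m_ge : Delta * (INR n * INR n ^ j) <= INR (m_of Delta j.+1 n).
  by rewrite tech_pow_Rmult -INR_expn; apply: le_ceilR.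
have N_le : INR (n.+1 ^ j.+1)%N <= INR n * INR n ^ j + 3 ^ j.+1 * INR n ^ j.
  have := le_INR _ _ (elimT leP (succn_expn_le j n_gt0)).
  by rewrite plus_INR INR_muln !INR_expn (_ : INR 3 = 3) //=; lra.
set L := ln (1 - _) in L_lt0 m_ge *; set X := INR n ^ j in m_ge N_le *.
have : 0 <= (INR (m_of Delta j.+1 n) - Delta * (INR n * X)) * (- L).
  by apply: Rmult_le_pos; lra.
have : INR (n.+1 ^ j.+1)%N * ln 2 <= (INR n * X + 3 ^ j.+1 * X) * ln 2.
  by apply: Rmult_le_compat_r; lra.
nra.
Qed.

Lemma unif_exponent_tendsto k Delta : (1 <= k)%N -> Delta_k k < Delta ->
  forall M, 0 < M -> exists N, forall n, (N <= n)%N -> unif_exponent Delta k n <= - M.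
Proof.
case: k => [//|j] _ Delta_gt M M_gt0.
have c_gt0 : 0 < - (ln 2 + Delta * ln (1 - / 2 ^ j.+1)).
  have := Delta_k_mul_ln (ltn0Sn j); have := ln_one_sub_inv_pow2_lt0 (ltn0Sn j); nra.
have [N N_ok] := eventually_lt_mul (3 ^ j.+1 * ln 2 + M) c_gt0.
exists (maxn N 1) => n; rewrite geq_max => /andP [N_le n_gt0].
apply: Rle_trans (unif_exponent_le j Delta n_gt0) _.
have X_ge1 : 1 <= INR n ^ j by apply/pow_R1_Rle/(le_INR 1)/leP.
have := N_ok n N_le; nra.
Qed.

End Asymptotics.

Theorem mainTheorem8 (k : nat) (Delta : R) :
  (1 <= k)%N -> Rlt (Delta_k k) Delta ->
  Un_cv (fun n : nat =>
           Rmax (P_unif_accept n k (m_of Delta k n))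
                (P_planted_reject n k (m_of Delta k n))) R0.
Proof.
move=> k_gt0 Delta_gt.
apply: (Un_cv_squeeze0 (v := fun n => exp (unif_exponent Delta k n))).
  move=> n; rewrite P_planted_reject_eq0 Rmax_left; last exact: P_unif_accept_ge0.
  by rewrite -exp_unif_exponent //; split; [apply: P_unif_accept_ge0 | apply: P_unif_accept_le].
exact/Un_cv_exp_tendsto_minus_infty/unif_exponent_tendsto.
Qed.
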